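(* Every finite connected graph has a metric basis that contains no cut-vertices.
   Context: All graphs are simple. For vertices $u,v$ of a connected graph $G$, $d(u,v)$ is the length of a shortest $u$–$v$ path. A set $R\subseteq V(G)$ is a resolving set if for all distinct $x,y\in V(G)$ there is $r\in R$ with $d(r,x)\neq d(r,y)$. The metric dimension $\dim(G)$ is the minimum cardinality of a resolving set, and a resolving set of cardinality $\dim(G)$ is a metric basis. A cut-vertex is a vertex $v$ such that $G-v$ is disconnected. *)

From mathcomp Require Import all_boot.
Set Implicit Arguments. Unset Strict Implicit. Unset Printing Implicit Defensive.

Definition simple_graph (T : finType) (e : rel T) : Prop :=
  symmetric e /\ irreflexive e.

Definition connected_graph (T : finType) (e : rel T) : Prop :=
  forall x y : T, connect e x y.

Definition walkb (T : finType) (e : rel T) (x y : T) (n : nat) : bool :=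
  [exists p : n.-tuple T, path e x p && (last x p == y)].

(* A shortest path has fewer than #|T| edges,
   so searching n in [0, #|T|) suffices; if no walk exists the value is #|T|
   (irrelevant for connected graphs). *)
Definition dist (T : finType) (e : rel T) (x y : T) : nat :=
  find (walkb e x y) (iota 0 #|T|).

Definition resolving (T : finType) (e : rel T) (R : {set T}) : Prop :=
  forall x y : T, x != y -> exists2 r, r \in R & dist e r x != dist e r y.

Definition metric_basis (T : finType) (e : rel T) (R : {set T}) : Prop :=
  resolving e R /\ forall S : {set T}, resolving e S -> #|R| <= #|S|.

Definition del_rel (T : finType) (e : rel T) (v : T) : rel T :=
  fun x y => [&& x != v, y != v & e x y].

Definition cut_vertex (T : finType) (e : rel T) (v : T) : Prop :=
  exists x y : T, [/\ x != v, y != v & ~~ connect (del_rel e v) x y].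

From mathcomp Require Import all_boot zify.
Set Implicit Arguments. Unset Strict Implicit. Unset Printing Implicit Defensive.

(* If x and y lie in different components of G - v, then
   d(x,y) = d(x,v) + d(v,y).  Hence if a is separated by v from x and b from y,
   one of a, b resolves every pair x, y that v resolves.
   Let R be a metric basis containing a cut-vertex v.  Some component C of G - v
   contains no vertex of R: otherwise every vertex is separated by v from some
   vertex of R \ v, and R \ v would already be resolving.  Let u be a vertex of
   C farthest from v.  The vertices of C are separated from those of R \ v
   (which lie outside C), all other vertices are separated from u, so
   u + (R \ v) is again a metric basis; and u is not a cut-vertex, since by
   maximality every vertex reaches v in G - u.  So a metric basis with the
   fewest cut-vertices has none. *)

Section Walks.
Variables (T : finType) (e : rel T).
Hypothesis esym : symmetric e.

Definition walk (x y : T) (n : nat) : Prop :=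
  exists p : seq T, [/\ size p = n, path e x p & last x p = y].

Lemma walkbP x y n : reflect (walk x y n) (walkb e x y n).
Proof.
apply: (iffP existsP) => [[p /andP[pp /eqP lp]] | [p [sp pp lp]]].
  by exists (val p); rewrite size_tuple.
have sp' : size p == n by apply/eqP.
by exists (Tuple sp'); rewrite /= pp lp eqxx.
Qed.

Lemma walk_cat x y z m n : walk x y m -> walk y z n -> walk x z (m + n).
Proof.
case=> p [sp pp lp] [q [sq pq lq]]; exists (p ++ q).
by rewrite size_cat cat_path last_cat lp sp sq pp pq.
Qed.

Lemma walk_rev x y n : walk x y n -> walk y x n.
Proof.
case=> p [sp pp lp]; exists (rev (belast x p)); split.
- by rewrite size_rev size_belast.
- by rewrite -lp rev_path; apply: sub_path pp => a b; rewrite esym.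
- case: p sp pp lp => [|a p] _ _ /= lp; first by rewrite lp.
  by rewrite rev_cons last_rcons.
Qed.

Lemma connect_walk x y : connect e x y -> exists2 n, n < #|T| & walk x y n.
Proof.
case/connectP=> p pp ->; have [p' pp' up' _] := shortenP pp.
exists (size p'); last by exists p'.
by move/card_uniqP: up' => /= <-; apply: max_card.
Qed.

End Walks.

Section Distance.
Variables (T : finType) (e : rel T).
Hypotheses (esym : symmetric e) (eirr : irreflexive e) (econ : connected_graph e).
Local Notation d := (dist e).
Local Notation D := (del_rel e).

Lemma dist_min x y n : walk e x y n -> d x y <= n.
Proof.
move=> w; rewrite leqNgt; apply/negP => lt.
have dle : d x y <= #|T|.
  by have := find_size (walkb e x y) (iota 0 #|T|); rewrite size_iota.
have := before_find 0 lt; rewrite nth_iota ?(leq_trans lt dle) // add0n.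
by move/walkbP: w => ->.
Qed.

Lemma dist_walk x y : walk e x y (d x y).
Proof.
have [n ltn wn] := connect_walk (econ x y).
have hs : has (walkb e x y) (iota 0 #|T|).
  by apply/hasP; exists n; [rewrite mem_iota | apply/walkbP].
have := nth_find 0 hs; rewrite nth_iota; first by move/walkbP.
by move: hs; rewrite has_find size_iota.
Qed.

Lemma dist_eq0 x y : (d x y == 0) = (x == y).
Proof.
apply/eqP/eqP => [d0 | ->].
  by have [[|? ?] [/= s0 _ <-]] := dist_walk x y; rewrite // d0 in s0.
by apply/eqP; rewrite -leqn0 dist_min //; exists [::].
Qed.

Lemma dist0 x : d x x = 0.
Proof. by apply/eqP; rewrite dist_eq0. Qed.

Lemma dist_pos x y : (0 < d x y) = (x != y).
Proof. by rewrite lt0n dist_eq0. Qed.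

Lemma dist_triangle x y z : d x z <= d x y + d y z.
Proof. exact/dist_min/(walk_cat (dist_walk x y) (dist_walk y z)). Qed.

Lemma dist_sym x y : d x y = d y x.
Proof.
by apply/eqP; rewrite eqn_leq !dist_min //; apply: walk_rev => //; apply: dist_walk.
Qed.

Lemma dist_adj x y : e x y -> d x y = 1.
Proof.
move=> exy; apply/eqP; rewrite eqn_leq dist_pos dist_min; last first.
  by exists [:: y]; rewrite /= exy.
by apply: contraTneq exy => ->; rewrite eirr.
Qed.

Section CutVertex.
Variable v : T.

Lemma connect_del_sym x y : connect (D v) x y = connect (D v) y x.
Proof.
apply: sym_connect_sym => a b.
by rewrite /del_rel esym; case: (a != v); case: (b != v).
Qed.

Lemma connect_del_v z : z != v -> ~~ connect (D v) z v.
Proof.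
move=> zv; apply/connectP => -[p pp lp].
have /allP avoid : all (predC1 v) p.
  by elim: p z {zv lp} pp => //= a p IH z /andP[/and3P[_ -> _] /IH].
have := mem_last z p; rewrite -lp inE eq_sym (negbTE zv) => /avoid.
by rewrite /= eqxx.
Qed.

Lemma path_del z p : z != v -> v \notin p -> path e z p -> path (D v) z p.
Proof.
elim: p z => //= a p IH z zv; rewrite inE negb_or eq_sym => /andP[av vp] /andP[eza pp].
by rewrite /del_rel zv av eza IH // eq_sym.
Qed.

(* A shortest x-y path must pass through v; split it there. *)
Lemma dist_cut x y : ~~ connect (D v) x y -> d x y = d x v + d v y.
Proof.
move=> nxy; apply/eqP; rewrite eqn_leq dist_triangle /=.
have [xv | xv] := eqVneq x v; first by rewrite xv dist0.
have [p [sp pp lp]] := dist_walk x y.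
have [vp | vp] := boolP (v \in p); last first.
  by case/negP: nxy; apply/connectP; exists p; rewrite ?path_del.
move: sp pp lp; case/path.splitP: vp => p1 p2 sp.
rewrite cat_path last_cat last_rcons => /andP[pp1 pp2] lp.
rewrite -sp size_cat.
by apply: leq_add; apply: dist_min; [exists (rcons p1 v); rewrite last_rcons | exists p2].
Qed.

Lemma dist_cut_resolve a b x y :
  ~~ connect (D v) a x -> ~~ connect (D v) b y -> d v x != d v y ->
  (d a x != d a y) || (d b x != d b y).
Proof.
rewrite -!negb_and => /dist_cut dax /dist_cut dby.
apply: contra => /andP[/eqP ax /eqP bx].
have := dist_triangle a v y; have := dist_triangle b v x.
by rewrite -ax dax bx dby; lia.
Qed.

Lemma resolving_exchange (R S : {set T}) :
  resolving e R -> R :\ v \subset S ->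
  (forall z, exists2 r, r \in S & ~~ connect (D v) r z) -> resolving e S.
Proof.
move=> resR /subsetP RS sep x y xy; have [r rR dr] := resR x y xy.
have [rv | rv] := eqVneq r v; last by exists r; rewrite // RS // !inE rv.
rewrite {}rv in dr; have [a aS ax] := sep x; have [b bS b_y] := sep y.
by case/orP: (dist_cut_resolve ax b_y dr) => ?; [exists a | exists b].
Qed.

Hypothesis cutv : cut_vertex e v.

Lemma cut_vertex_separated z : exists2 w, w != v & ~~ connect (D v) w z.
Proof.
have [a [b [av bv nab]]] := cutv.
have [zv | zv] := eqVneq z v; first by exists a; rewrite // zv connect_del_v.
have [az | naz] := boolP (connect (D v) a z); last by exists a.
exists b => //; apply: contra nab => bz.
by apply: connect_trans az _; rewrite connect_del_sym.
Qed.

Lemma exists_adj_connect_del a :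
  a != v -> exists2 a', e v a' & connect (D v) a' a.
Proof.
move=> av; have [[|a' p] [sp /= pp lp]] := dist_walk v a.
  by rewrite -lp eqxx in av.
case/andP: pp => ea pp; exists a' => //; apply/contraT => /dist_cut.
have : d a' a <= size p by apply: dist_min; exists p.
have : 0 < d a' v by rewrite dist_pos; apply: contraTneq ea => ->; rewrite eirr.
by move: sp => /= <-; lia.
Qed.

Lemma resolving_cut_other R : resolving e R -> exists2 r, r \in R & r != v.
Proof.
move=> resR; have [a [b [av bv nab]]] := cutv.
have [a' ea' ca] := exists_adj_connect_del av.
have [b' eb' cb] := exists_adj_connect_del bv.
have ab' : a' != b'.
  apply: contra nab => /eqP ab; rewrite connect_del_sym in ca.
  by apply: connect_trans ca _; rewrite ab.
have [r rR dr] := resR _ _ ab'; exists r => //.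
by apply: contraNneq dr => ->; rewrite !dist_adj.
Qed.

End CutVertex.

Lemma farthest_not_cut u v :
  u != v -> (forall z, connect (D v) u z -> d v z <= d v u) -> ~ cut_vertex e u.
Proof.
move=> uv umax [x [y [xu yu nxy]]].
suff reach z : z != u -> connect (D u) z v.
  case/negP: nxy; apply: connect_trans (reach x xu) _.
  by rewrite connect_del_sym // reach.
move=> zu; apply/contraT; rewrite connect_del_sym // => /dist_cut dvz.
have : 0 < d u z by rewrite dist_pos eq_sym.
have [uz | nuz] := boolP (connect (D v) u z); first by have := umax z uz; lia.
have : 0 < d v u by rewrite dist_pos eq_sym.
by have := dist_cut nuz; rewrite (dist_sym u v); lia.
Qed.

Lemma basis_landmark_free_component R v :
  metric_basis e R -> v \in R -> cut_vertex e v ->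
  exists2 c, c != v & {in R :\ v, forall r, ~~ connect (D v) c r}.
Proof.
move=> [resR minR] vR cutv.
have [c /andP[cv /forall_inP free] | none] :=
  pickP [pred c | (c != v) && [forall r in R :\ v, ~~ connect (D v) c r]].
  by exists c.
suff /minR : resolving e (R :\ v) by rewrite (cardsD1 v R) vR add1n ltnn.
apply: resolving_exchange resR (subxx _) _ => z.
have [w wv wz] := cut_vertex_separated cutv z.
have := none w; rewrite /= wv => /negbT/forall_inPn[r rR /negPn wr].
by exists r => //; apply: contra wz; apply: connect_trans wr.
Qed.

Lemma exchange_cut_vertex R v :
  metric_basis e R -> v \in R -> cut_vertex e v ->
  exists2 u, ~ cut_vertex e u & metric_basis e (u |: (R :\ v)).
Proof.
move=> basisR vR cutv; have [resR minR] := basisR.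
have [c cv freeC] := basis_landmark_free_component basisR vR cutv.
have [u cu umax] := @arg_maxnP T c (connect (D v) c) (d v) (connect0 _ _).
have uv : u != v by apply: contraTneq cu => ->; apply: connect_del_v.
exists u.
  by apply: farthest_not_cut uv _ => z uz; apply/umax/(connect_trans cu uz).
have [r0 r0R r0v] := resolving_cut_other cutv resR.
have resS : resolving e (u |: (R :\ v)).
  apply: resolving_exchange resR (subsetUr _ _) _ => z.
  have [cz | ncz] := boolP (connect (D v) c z).
    exists r0; first by rewrite !inE r0v r0R orbT.
    apply: contra (freeC r0 _) => [r0z | ]; last by rewrite !inE r0v.
    by apply: connect_trans cz _; rewrite connect_del_sym.
  by exists u; rewrite ?setU11 //; apply: contra ncz; apply: connect_trans.
have uR : u \notin R.
  by apply: contraTN cu => uR; apply: freeC; rewrite !inE uv.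
have cardS : #|u |: (R :\ v)| = #|R|.
  by rewrite cardsU1 in_setD1 (negbTE uR) andbF (cardsD1 v R) vR.
by split=> // S /minR; rewrite cardS.
Qed.

Definition resolvingb (R : {set T}) : bool :=
  [forall x, forall y, (x != y) ==> [exists r in R, d r x != d r y]].

Lemma resolvingbP R : reflect (resolving e R) (resolvingb R).
Proof.
apply: (iffP forallP) => [res x y xy | res x].
  by have /forallP/(_ y)/implyP/(_ xy)/exists_inP[r] := res x; exists r.
apply/forallP => y; apply/implyP => /res[r rR dr].
by apply/exists_inP; exists r.
Qed.

Lemma exists_metric_basis : exists R, metric_basis e R.
Proof.
have resT : resolvingb setT.
  by apply/resolvingbP => x y xy; exists x; rewrite ?inE // dist0 eq_sym dist_eq0.
have [R /resolvingbP resR minR] := arg_minnP (fun S : {set T} => #|S|) resT.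
by exists R; split=> // S /resolvingbP /minR.
Qed.

Lemma metric_basis_card R S : metric_basis e R -> metric_basis e S -> #|R| = #|S|.
Proof. by move=> [resR minR] [resS minS]; apply/eqP; rewrite eqn_leq minR ?minS. Qed.

Definition cut_vertexb (v : T) : bool :=
  [exists x, exists y, [&& x != v, y != v & ~~ connect (D v) x y]].

Lemma cut_vertexbP v : reflect (cut_vertex e v) (cut_vertexb v).
Proof.
apply: (iffP existsP) => [[x /existsP[y /and3P[]]] | [x [y []]]].
  by exists x, y.
by exists x; apply/existsP; exists y; apply/and3P.
Qed.

End Distance.

Theorem corollary1 (T : finType) (e : rel T) :
  simple_graph e -> connected_graph e ->
  exists R : {set T}, metric_basis e R /\ (forall v, v \in R -> ~ cut_vertex e v).
Proof.
move=> [esym eirr] econ; have [B basisB] := exists_metric_basis econ.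
pose is_basis S := resolvingb e S && (#|S| == #|B|).
pose cut_count (S : {set T}) := #|[set v in S | cut_vertexb e v]|.
have [|R /andP[/resolvingbP resR /eqP cardR] minR] :=
  @arg_minnP _ B is_basis cut_count.
  by rewrite /is_basis eqxx andbT; apply/resolvingbP; case: basisB.
have basisR : metric_basis e R by split=> // S /(proj2 basisB); rewrite cardR.
exists R; split=> // v vR cutv.
have [u ncutu basisS] := exchange_cut_vertex esym eirr econ basisR vR cutv.
have /minR : is_basis (u |: (R :\ v)).
  rewrite /is_basis -cardR (metric_basis_card basisS basisR) eqxx andbT.
  by apply/resolvingbP; case: basisS.
apply/negP; rewrite -ltnNge /cut_count (cardsD1 v [set w in R | cut_vertexb e w]).
rewrite inE vR (introT (cut_vertexbP _ _) cutv) add1n ltnS.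
apply/subset_leq_card/subsetP => w; rewrite !inE.
by case/andP=> /orP[/eqP -> /(cut_vertexbP _ _) | /andP[-> ->] ->].
Qed.
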